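(* Let $\alpha$ be a cylindric partition on $\mathcal C_{k,n}$ and $t$ a nonnegative integer. The number of marble games with $t$ turns that start with the arrangement $\operatorname{Arr}(\alpha)$ equals the number of marble games with $t$ turns that end with the arrangement $\operatorname{Arr}(\alpha)$, which in turn equals the number of marble games with $t$ turns that start with $\operatorname{Arr}(\alpha)$ but in which marbles are passed counterclockwise (each $p_i$ passes to $p_{i-1}$). These equalities remain true if every turn is restricted so that exactly one marble changes hands on every turn.
   Context: Fix integers $n>k\ge1$. A cylindric partition is a weakly decreasing integer sequence $(\alpha_m)_{m\in\mathbb Z}$ with $\alpha_m=\alpha_{m+k}+n-k$. There are $k$ people $p_0,\dots,p_{k-1}$ in a circle, indices taken mod $k$, with $p_{i+1}$ the clockwise neighbour of $p_i$. The arrangement $\operatorname{Arr}(\alpha)$ gives $p_i$ exactly $\alpha_{i-1}-\alpha_i$ marbles ($n-k$ marbles in total). A (clockwise) turn is a tuple $(a_0,\dots,a_{k-1})$ of nonnegative integers in which simultaneously each $p_i$ passes $a_i$ marbles to $p_{i+1}$, where $a_i$ is at most the number of marbles $p_i$ holds before the turn. A marble game with $t$ turns is an initial arrangement of the $n-k$ marbles together with a sequence of $t$ successive valid turns; it ends with the arrangement obtained after the last turn. *)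

From mathcomp Require Import all_boot all_order all_algebra.
Set Implicit Arguments. Unset Strict Implicit. Unset Printing Implicit Defensive.
Import Order.TTheory GRing.Theory Num.Theory.

Definition cylindric (k n : nat) (alpha : int -> int) : Prop :=
  (forall m : int, (alpha (m + 1) <= alpha m)%R) /\
  (forall m : int, alpha m = (alpha (m + k%:Z) + (n%:Z - k%:Z))%R).

Definition Arr (k : nat) (alpha : int -> int) (i : 'I_k) : nat :=
  absz (alpha ((i : nat)%:Z - 1) - alpha (i : nat)%:Z)%R.

(* Indices mod k: clockwise neighbour of p_i is p_{i+1} = ordS i,
   and p_{i-1} = ord_pred i. *)

(* One simultaneous turn x applied to arrangement a.
   cw = true : p_i passes x_i marbles to p_{i+1} (clockwise);
   cw = false: p_i passes x_i marbles to p_{i-1} (counterclockwise). *)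
Definition step (k : nat) (cw : bool) (a x : 'I_k -> nat) : 'I_k -> nat :=
  fun i => a i - x i + x (if cw then ord_pred i else ordS i).

Definition valid_turn (k : nat) (a x : 'I_k -> nat) : bool :=
  [forall i, x i <= a i].

Fixpoint valid_game (k : nat) (cw : bool) (a : 'I_k -> nat)
    (ts : seq ('I_k -> nat)) : bool :=
  match ts with
  | [::] => true
  | x :: ts' => valid_turn a x && valid_game cw (step cw a x) ts'
  end.

Fixpoint final_arr (k : nat) (cw : bool) (a : 'I_k -> nat)
    (ts : seq ('I_k -> nat)) : 'I_k -> nat :=
  match ts with
  | [::] => a
  | x :: ts' => final_arr cw (step cw a x) ts'
  end.

(* Arrangements / turns are encoded in the finite type of functions
   'I_k -> 'I_(N.+1), where N = n - k is the total number of marbles;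
   this loses nothing since every holding and every passed amount is <= N. *)
Definition fvec (k N : nat) := {ffun 'I_k -> 'I_N.+1}.
Definition tofun (k N : nat) (f : fvec k N) : 'I_k -> nat :=
  fun i => nat_of_ord (f i).

Definition one_marble (k N : nat) (x : fvec k N) : bool :=
  (\sum_(i < k) (x i : nat) == 1)%N.

Definition turns_ok (k N : nat) (restr : bool) (ts : seq (fvec k N)) : bool :=
  restr ==> all (@one_marble k N) ts.

Definition n_games_from (k N t : nat) (cw restr : bool) (A : 'I_k -> nat) : nat :=
  #|[set ts : t.-tuple (fvec k N) |
      turns_ok restr ts && valid_game cw A (map (@tofun k N) ts)]|.

Definition n_games_to (k N t : nat) (restr : bool) (A : 'I_k -> nat) : nat :=
  #|[set g : fvec k N * t.-tuple (fvec k N) |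
      [&& (\sum_(i < k) (g.1 i : nat) == N)%N,
          turns_ok restr g.2,
          valid_game true (tofun g.1) (map (@tofun k N) g.2) &
          [forall i, final_arr true (tofun g.1) (map (@tofun k N) g.2) i == A i]]]|.

(* Arrangements of the N marbles form a finite set on which clockwise and counterclockwise
   turns define transition-count matrices T and T'. Games with t turns starting at A are
   counted by (T^t 1)(A), games ending at A by (1^T T^t)(A) = ((T^T)^t 1)(A), and T^T = T'
   because a clockwise turn played backwards is a counterclockwise one; counterclockwise
   games from A are counted by (T'^t 1)(A). Everything thus reduces to T^t 1 = T'^t 1, which
   follows by induction from T 1 = T' 1 and T T' = T' T. The row sums of both matrices count
   the turns available from an arrangement, whatever their direction. For the products, the
   marbles that go from p_i to p_(i+1) in a clockwise turn and straight back in the next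
   counterclockwise turn can be cancelled, which reorders the two turns injectively; the
   reflection i -> k - 1 - i of the circle supplies the reverse injection. All these maps
   preserve the number of marbles moved by each turn, so the one-marble restriction is
   respected throughout. *)

From mathcomp Require Import all_boot all_order all_algebra zify.
From Stdlib Require Import FunctionalExtensionality.
Import GRing.Theory Num.Theory.
Set Implicit Arguments. Unset Strict Implicit. Unset Printing Implicit Defensive.

Section Kernels.
Variable T : finType.
Implicit Types (M : T -> T -> nat) (g h : T -> nat) (D : pred T).

Definition kmulv M g a := \sum_b M a b * g b.
Definition kpow M t g := iter t (kmulv M) g.
Definition kmul M1 M2 a c := \sum_b M1 a b * M2 b c.
Definition ktr M a b := M b a.
Definition kclosed M D := forall a b, D a -> M a b != 0 -> D b.

Lemma kpowSr M t g : kpow M t.+1 g = kpow M t (kmulv M g).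
Proof. exact: iterSr. Qed.

Lemma kmulvA M1 M2 g a : kmulv M1 (kmulv M2 g) a = kmulv (kmul M1 M2) g a.
Proof.
rewrite /kmulv /kmul; under eq_bigr do rewrite big_distrr /=.
rewrite exchange_big /=; apply: eq_bigr => c _.
by rewrite big_distrl /=; apply: eq_bigr => b _; rewrite mulnA.
Qed.

Lemma sum_mul_kmulv M h g : \sum_a h a * kmulv M g a = \sum_b kmulv (ktr M) h b * g b.
Proof.
rewrite /kmulv; under eq_bigr do rewrite big_distrr /=.
rewrite exchange_big /=; apply: eq_bigr => b _.
by rewrite big_distrl /=; apply: eq_bigr => a _; rewrite mulnA [h a * _]mulnC.
Qed.

Lemma kmulv_eq_on M D g g' :
  kclosed M D -> {in D, g =1 g'} -> {in D, kmulv M g =1 kmulv M g'}.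
Proof.
move=> clM eq_g a Da; apply: eq_bigr => b _.
have [->|nz] := eqVneq (M a b) 0; first by rewrite !mul0n.
by rewrite eq_g //; exact: clM nz.
Qed.

Lemma kpow_eq_on M D t g g' :
  kclosed M D -> {in D, g =1 g'} -> {in D, kpow M t g =1 kpow M t g'}.
Proof. by move=> clM eq_g; elim: t => //= t IH; exact: kmulv_eq_on. Qed.

Lemma kmulv_kpow_comm M1 M2 D t g :
  kclosed M2 D -> (forall a c, D a -> kmul M1 M2 a c = kmul M2 M1 a c) ->
  {in D, kmulv M1 (kpow M2 t g) =1 kpow M2 t (kmulv M1 g)}.
Proof.
move=> cl2 comm; elim: t => // t IH a Da /=.
transitivity (kmulv (kmul M2 M1) (kpow M2 t g) a).
  by rewrite kmulvA; apply: eq_bigr => c _; rewrite comm.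
by rewrite -kmulvA; exact: (kmulv_eq_on cl2 IH Da).
Qed.

Lemma kpow1_eq M1 M2 D t :
  kclosed M1 D -> kclosed M2 D ->
  (forall a c, D a -> kmul M1 M2 a c = kmul M2 M1 a c) ->
  {in D, kmulv M1 (fun=> 1) =1 kmulv M2 (fun=> 1)} ->
  {in D, kpow M1 t (fun=> 1) =1 kpow M2 t (fun=> 1)}.
Proof.
move=> cl1 cl2 comm rows; elim: t => // t IH a Da.
rewrite [LHS]/= (kmulv_eq_on cl1 IH) // (kmulv_kpow_comm _ _ cl2 comm) // kpowSr.
exact: (kpow_eq_on _ cl2 rows Da).
Qed.

Lemma sum_mul_kpow M t h g :
  \sum_a h a * kpow M t g a = \sum_c kpow (ktr M) t h c * g c.
Proof. by elim: t h => // t IH h; rewrite [in RHS]kpowSr -IH sum_mul_kmulv. Qed.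

End Kernels.

Lemma sum_nat_of_bool (T : finType) (P : pred T) : \sum_x (P x : nat) = #|P|.
Proof.
by rewrite -sum1_card [RHS]big_mkcond; apply: eq_bigr => x _; rewrite unfold_in; case: (P x).
Qed.

Lemma leq_summand (I : finType) (F : I -> nat) i : F i <= \sum_j F j.
Proof. by rewrite (bigD1 i) //= leq_addr. Qed.

Lemma leq_card_in_can (T U : finType) (P : pred T) (Q : pred U) (f : T -> U) (g : U -> T) :
  (forall p, P p -> Q (f p)) -> (forall p, P p -> g (f p) = p) -> #|P| <= #|Q|.
Proof.
move=> PQ fK; have f_inj : {in P &, injective f}.
  by move=> p q Pp Pq eq_f; rewrite -(fK p Pp) -(fK q Pq) eq_f.
rewrite -(card_in_imset f_inj); apply/subset_leq_card/subsetP => _ /imsetP [p Pp ->].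
exact: PQ.
Qed.

Lemma big_tuple0 (T : finType) (F : 0.-tuple T -> nat) : \sum_ts F ts = F [tuple].
Proof. by rewrite (big_pred1 [tuple]) // => ts; rewrite /= (tuple0 ts); apply/esym/eqP. Qed.

Lemma big_tupleS (T : finType) t (F : t.+1.-tuple T -> nat) :
  \sum_ts F ts = \sum_x \sum_(ts : t.-tuple T) F [tuple of x :: ts].
Proof.
rewrite pair_big /= (reindex (fun p : T * t.-tuple T => [tuple of p.1 :: p.2])) //.
exists (fun ts : t.+1.-tuple T => (thead ts, [tuple of behead ts])).
- by move=> [x ts] _; congr pair; exact: val_inj.
- by move=> ts _; rewrite [RHS]tuple_eta.
Qed.

Lemma sum_transfer (I : finType) (s : I -> I) (f g : I -> nat) :
  injective s -> (forall i, g i <= f i) -> \sum_i (f i - g i + g (s i)) = \sum_i f i.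
Proof.
move=> s_inj le_gf.
have -> : \sum_i f i = \sum_i (f i - g i + g i) by apply: eq_bigr => i _; rewrite subnK.
by rewrite !big_split /= [X in _ = _ + X](reindex_inj s_inj).
Qed.

Lemma sum_step k cw (a x : 'I_k -> nat) :
  valid_turn a x -> \sum_i step cw a x i = \sum_i a i.
Proof.
move=> /forallP x_le_a; rewrite /step; case: cw; apply: sum_transfer => //.
- exact: ord_pred_inj.
- exact: ordS_inj.
Qed.

Lemma step_le_sum k cw (a x : 'I_k -> nat) i :
  valid_turn a x -> step cw a x i <= \sum_j a j.
Proof. by move=> x_valid; rewrite -(sum_step cw x_valid) leq_summand. Qed.

Lemma rev_ord_pred n (i : 'I_n) : rev_ord (ord_pred i) = ordS (rev_ord i).
Proof.
apply: val_inj => /=; case: i => [[|i] lt_in] /=.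
  by rewrite add0n modn_small ?prednK ?subnn // subn1 prednK // modnn.
by rewrite modnDr !modn_small ?subnSK ?leq_subr // ltnW.
Qed.

Lemma forall_rev_ord n (P : pred 'I_n) : [forall i, P (rev_ord i)] = [forall i, P i].
Proof. by apply/forallP/forallP => P_all i; first rewrite -(rev_ordK i); exact: P_all. Qed.

Section Games.
Variables k N : nat.
Implicit Types (a b c x y : fvec k N) (f : 'I_k -> nat) (cw restr : bool).

Definition fvec_of f : fvec k N := [ffun i => inord (f i)].

Lemma tofun_le a i : tofun a i <= N.
Proof. by rewrite /tofun -ltnS. Qed.

Lemma fvec_ofK f : (forall i, f i <= N) -> tofun (fvec_of f) = f.
Proof.
by move=> f_le; apply: functional_extensionality => i; rewrite /tofun ffunE inordK ?ltnS.
Qed.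

Lemma tofun_inj a b : tofun a =1 tofun b -> a = b.
Proof. by move=> eq_ab; apply/ffunP => i; apply: val_inj; exact: eq_ab. Qed.

Lemma tofunK : cancel (@tofun k N) fvec_of.
Proof. by move=> a; apply: tofun_inj => i; rewrite fvec_ofK //; exact: tofun_le. Qed.

Definition marbles a := \sum_i tofun a i.
Definition arrangement a := marbles a == N.

Lemma step_leN cw a f i :
  arrangement a -> valid_turn (tofun a) f -> step cw (tofun a) f i <= N.
Proof. by move=> /eqP a_N f_valid; rewrite -[X in _ <= X]a_N; exact: step_le_sum. Qed.

Lemma arrangement_step cw a f :
  arrangement a -> valid_turn (tofun a) f -> arrangement (fvec_of (step cw (tofun a) f)).
Proof.
move=> a_arr f_valid; rewrite /arrangement /marbles fvec_ofK ?sum_step //.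
by move=> i; exact: step_leN.
Qed.

Lemma sum_tofun_eq f (H : fvec k N -> nat) : (forall i, f i <= N) ->
  \sum_b ([forall i, f i == tofun b i] : nat) * H b = H (fvec_of f).
Proof.
move=> f_le; rewrite (bigD1 (fvec_of f)) //= big1 ?addn0.
  by rewrite fvec_ofK // (_ : [forall i, _] = true) ?mul1n //; apply/forallP.
move=> b /eqP neq_b; case: forallP => // eq_fb; case: neq_b; apply: tofun_inj => i.
by rewrite fvec_ofK //; apply/esym/eqP.
Qed.

Definition turn_ok restr x := restr ==> one_marble x.

Lemma turn_ok_marbles restr x y : marbles x = marbles y -> turn_ok restr x = turn_ok restr y.
Proof. by rewrite /turn_ok /one_marble /marbles /tofun => ->. Qed.

Definition nturns cw restr a b : nat :=
  \sum_x (turn_ok restr x && valid_turn (tofun a) (tofun x) &&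
          [forall i, step cw (tofun a) (tofun x) i == tofun b i]).

Definition ngames cw restr t A (Q : pred ('I_k -> nat)) : nat :=
  \sum_(ts : t.-tuple (fvec k N))
    (turns_ok restr ts && valid_game cw A (map (@tofun k N) ts)
     && Q (final_arr cw A (map (@tofun k N) ts))).

Lemma ngames0 cw restr A Q : ngames cw restr 0 A Q = Q A.
Proof. by rewrite /ngames big_tuple0 /=; case: restr; case: (Q A). Qed.

Lemma ngamesS cw restr t A Q : ngames cw restr t.+1 A Q =
  \sum_x (turn_ok restr x && valid_turn A (tofun x)) *
          ngames cw restr t (step cw A (tofun x)) Q.
Proof.
rewrite /ngames big_tupleS; apply: eq_bigr => x _; rewrite big_distrr /=.
apply: eq_bigr => ts _; rewrite /turns_ok /turn_ok /=.
by case: restr; case: (one_marble x); case: (valid_turn A (tofun x));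
  rewrite /= ?mul0n ?mul1n ?andbF.
Qed.

Lemma ngames_kpow cw restr t Q a : arrangement a ->
  ngames cw restr t (tofun a) Q = kpow (nturns cw restr) t (fun c => Q (tofun c)) a.
Proof.
elim: t a => [|t IH] a a_arr; first by rewrite ngames0.
rewrite ngamesS [RHS]/= /kmulv /nturns.
under [RHS]eq_bigr do rewrite big_distrl /=.
rewrite exchange_big /=; apply: eq_bigr => x _.
case x_ok: (turn_ok restr x && valid_turn (tofun a) (tofun x)); last first.
  by rewrite mul0n big1 // => b _; rewrite x_ok.
have x_valid : valid_turn (tofun a) (tofun x) by case/andP: x_ok.
have step_bounded i : step cw (tofun a) (tofun x) i <= N by exact: step_leN.
by rewrite mul1n sum_tofun_eq // -IH ?fvec_ofK //; exact: arrangement_step.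
Qed.

Lemma nturns_closed cw restr : kclosed (nturns cw restr) arrangement.
Proof.
move=> a b a_arr; rewrite sum_nat_eq0 => /forallPn [x /=].
case x_ok: (turn_ok restr x && valid_turn (tofun a) (tofun x)) => //=.
case: forallP => //= /(_ _) /eqP step_b _; have /andP [_ x_valid] := x_ok.
rewrite /arrangement -[X in _ == X](eqP a_arr) /marbles -(sum_step cw x_valid).
by apply/eqP/eq_bigr => i _; rewrite step_b.
Qed.

Lemma kmulv_nturns1 cw restr a : arrangement a ->
  kmulv (nturns cw restr) (fun=> 1) a =
  \sum_x (turn_ok restr x && valid_turn (tofun a) (tofun x)).
Proof.
move=> a_arr; rewrite /kmulv /nturns; under eq_bigr do rewrite muln1.
rewrite exchange_big /=; apply: eq_bigr => x _.
case x_ok: (turn_ok restr x && valid_turn (tofun a) (tofun x)); last by rewrite big1.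
have /andP [_ x_valid] := x_ok.
have := sum_tofun_eq (fun=> 1) (fun i => step_leN cw i a_arr x_valid) => /= <-.
by apply: eq_bigr => b _; rewrite muln1.
Qed.

Definition fvec_perm (s : 'I_k -> 'I_k) x : fvec k N := [ffun i => x (s i)].

Lemma tofun_perm s x i : tofun (fvec_perm s x) i = tofun x (s i).
Proof. by rewrite /tofun ffunE. Qed.

Lemma fvec_perm_can s s' : cancel s' s -> cancel (fvec_perm s) (fvec_perm s').
Proof. by move=> sK x; apply/ffunP => i; rewrite !ffunE sK. Qed.

Lemma marbles_perm s x : injective s -> marbles (fvec_perm s x) = marbles x.
Proof.
move=> s_inj; rewrite /marbles [RHS](reindex_inj s_inj).
by apply: eq_bigr => i _; rewrite tofun_perm.
Qed.

Lemma turn_ok_perm restr s x :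
  injective s -> turn_ok restr (fvec_perm s x) = turn_ok restr x.
Proof. by move=> s_inj; apply/turn_ok_marbles/marbles_perm. Qed.

(* Undoing a clockwise turn x is the counterclockwise turn in which p_(i+1) hands back the
   x_i marbles it has just received. *)
Lemma nturns_ktr restr a b : nturns true restr a b = nturns false restr b a.
Proof.
rewrite /nturns (reindex_inj (can_inj (fvec_perm_can (@ord_predK k)))).
apply: eq_bigr => x _; rewrite turn_ok_perm; last exact: ordS_inj.
case: (turn_ok restr x) => //=; congr nat_of_bool; rewrite /valid_turn /step.
apply/idP/idP => /andP [/forallP x_le /forallP step_eq];
  apply/andP; split; apply/forallP => i;
  move: (x_le i) (eqP (step_eq i)); rewrite !tofun_perm ?ord_predK; lia.
Qed.

Lemma n_games_from_kpow t cw restr a : arrangement a ->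
  n_games_from N t cw restr (tofun a) = kpow (nturns cw restr) t (fun=> 1) a.
Proof.
move=> a_arr; rewrite /n_games_from cardsE -sum_nat_of_bool.
rewrite -(ngames_kpow _ _ _ (fun=> true) a_arr).
by apply: eq_bigr => ts _; rewrite andbT.
Qed.

Lemma n_games_to_kpow t restr a : arrangement a ->
  n_games_to N t restr (tofun a) = kpow (nturns false restr) t (fun=> 1) a.
Proof.
move=> a_arr; rewrite /n_games_to cardsE -sum_nat_of_bool.
pose game_to c (ts : t.-tuple (fvec k N)) := [&& arrangement c, turns_ok restr ts,
  valid_game true (tofun c) (map (@tofun k N) ts) &
  [forall i, final_arr true (tofun c) (map (@tofun k N) ts) i == tofun a i]].
transitivity (\sum_c \sum_ts (game_to c ts : nat)); first by rewrite pair_big.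
transitivity (\sum_c arrangement c *
    kpow (nturns true restr) t (fun c' => [forall i, tofun c' i == tofun a i]) c).
  apply: eq_bigr => c _; case: (boolP (arrangement c)) => [c_arr | c_arr]; last first.
    by rewrite mul0n big1 // => ts _; rewrite /game_to (negPf c_arr).
  rewrite mul1n -(ngames_kpow _ _ _ (fun f => [forall i, f i == tofun a i]) c_arr).
  apply: eq_bigr => ts _.
  by rewrite /game_to c_arr /= andbA.
rewrite sum_mul_kpow (bigD1 a) //= big1 ?addn0 => [|c /negPf c_neq_a].
  rewrite (_ : [forall i, _] = true) ?muln1; last exact/forallP.
  have -> : ktr (nturns true restr) = nturns false restr.
    by do 2!apply: functional_extensionality => ?; exact: nturns_ktr.
  apply: (kpow_eq_on _ (@nturns_closed false restr)) => // c.
  by rewrite unfold_in /arrangement => ->.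
rewrite (_ : [forall i, _] = false) ?muln0 //.
by apply: contraFF c_neq_a => /forallP eq_ca; apply/eqP/tofun_inj => i; exact/eqP.
Qed.

Definition frev := fvec_perm (@rev_ord k).

Lemma frevK : involutive frev.
Proof. exact: fvec_perm_can rev_ordK. Qed.

Lemma arrangement_frev a : arrangement (frev a) = arrangement a.
Proof. by rewrite /arrangement marbles_perm //; exact: rev_ord_inj. Qed.

Lemma nturns_rev cw restr a b : nturns cw restr a b = nturns (~~ cw) restr (frev a) (frev b).
Proof.
have rev_ccw c d : nturns false restr c d = nturns true restr (frev c) (frev d).
  rewrite /nturns [RHS](reindex_inj (can_inj frevK)).
  apply: eq_bigr => x _; rewrite turn_ok_perm; last exact: rev_ord_inj.
  congr (nat_of_bool (_ && _ && _)); rewrite /valid_turn -forall_rev_ord;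
    apply: eq_forallb => i; rewrite /frev ?/step !tofun_perm ?rev_ord_pred //.
by case: cw; rewrite ?rev_ccw ?frevK.
Qed.

Definition two_turns cw restr a b (p : fvec k N * fvec k N) : bool :=
  [&& turn_ok restr p.1, valid_turn (tofun a) (tofun p.1), turn_ok restr p.2,
      valid_turn (step cw (tofun a) (tofun p.1)) (tofun p.2) &
      [forall i, step (~~ cw) (step cw (tofun a) (tofun p.1)) (tofun p.2) i == tofun b i]].

Lemma kmul_nturns cw restr a b : arrangement a ->
  kmul (nturns cw restr) (nturns (~~ cw) restr) a b = #|two_turns cw restr a b|.
Proof.
move=> a_arr; rewrite -sum_nat_of_bool.
transitivity (\sum_x \sum_y (two_turns cw restr a b (x, y) : nat)); last first.
  by rewrite pair_big; apply: eq_bigr => -[].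
rewrite /kmul /nturns; under eq_bigr do rewrite big_distrl /=.
rewrite exchange_big /=; apply: eq_bigr => x _.
under [RHS]eq_bigr do rewrite /two_turns andbA.
case x_ok: (turn_ok restr x && valid_turn (tofun a) (tofun x)) => /=; last first.
  by rewrite !big1.
have /andP [_ x_valid] := x_ok.
have step_bounded i : step cw (tofun a) (tofun x) i <= N by exact: step_leN.
rewrite sum_tofun_eq // fvec_ofK //.
by apply: eq_bigr => y _; rewrite andbA.
Qed.

(* In a clockwise turn x followed by a counterclockwise turn y, [back_forth x y i] marbles
   can be taken to go from p_i to p_(i+1) and straight back. *)
Definition back_forth x y i := minn (tofun x i) (tofun y (ordS i)).

Definition uncross_ccw x y i := tofun y i - back_forth x y (ord_pred i) + back_forth x y i.
Definition uncross_cw x y i := tofun x i - back_forth x y i + back_forth x y (ordS i).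
Definition uncross (p : fvec k N * fvec k N) :=
  (fvec_of (uncross_ccw p.1 p.2), fvec_of (uncross_cw p.1 p.2)).

(* After uncrossing, [back_forth] at index i is the original amount at index i + 1. *)
Definition recross_cw x y i := tofun x i - back_forth x y i + back_forth x y (ord_pred i).
Definition recross_ccw x y i :=
  tofun y i - back_forth x y (ord_pred i) + back_forth x y (ord_pred (ord_pred i)).
Definition recross (q : fvec k N * fvec k N) :=
  (fvec_of (recross_cw q.2 q.1), fvec_of (recross_ccw q.2 q.1)).

Lemma uncross_step restr a b x y : two_turns true restr a b (x, y) -> forall i,
  let a' := step false (tofun a) (uncross_ccw x y) in
  [/\ uncross_ccw x y i <= tofun a i, uncross_cw x y i <= a' i &
      step true a' (uncross_cw x y) i = tofun b i].
Proof.
case/and5P => _ /forallP x_le _ /forallP y_le /forallP final_b i /=.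
move: (x_le i) (y_le i) (eqP (final_b i)).
rewrite /step /uncross_ccw /uncross_cw /back_forth ?ordSK ?ord_predK /=.
by move=> *; split; lia.
Qed.

Lemma sum_uncross_ccw x y : \sum_i uncross_ccw x y i = marbles y.
Proof.
transitivity
  (\sum_i (tofun y i - back_forth x y (ord_pred i) + back_forth x y (ord_pred (ordS i)))).
  by apply: eq_bigr => i _; rewrite ordSK.
by apply: (sum_transfer (@ordS_inj k)) => i; rewrite /back_forth ord_predK geq_minr.
Qed.

Lemma sum_uncross_cw x y : \sum_i uncross_cw x y i = marbles x.
Proof. by apply: (sum_transfer (@ordS_inj k)) => i; rewrite geq_minl. Qed.

Lemma uncross_leN restr a b x y : arrangement a -> two_turns true restr a b (x, y) ->
  (forall i, uncross_ccw x y i <= N) /\ (forall i, uncross_cw x y i <= N).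
Proof.
move=> a_arr /uncross_step loc.
have ccw_valid : valid_turn (tofun a) (uncross_ccw x y) by apply/forallP => i; case: (loc i).
split=> i; have [le_a le_a' _] := loc i.
  exact: leq_trans le_a (tofun_le a i).
exact: leq_trans le_a' (step_leN _ _ a_arr ccw_valid).
Qed.

Lemma uncross_valid restr a b p : arrangement a ->
  two_turns true restr a b p -> two_turns false restr a b (uncross p).
Proof.
case: p => x y a_arr two_xy; have [ccw_le cw_le] := uncross_leN a_arr two_xy.
have /and5P [x_ok _ y_ok _ _] := two_xy; have loc := uncross_step two_xy.
rewrite /two_turns /= !fvec_ofK //; apply/and5P; split.
- by rewrite (turn_ok_marbles _ (y := y)) // /marbles fvec_ofK // sum_uncross_ccw.
- by apply/forallP => i; case: (loc i).
- by rewrite (turn_ok_marbles _ (y := x)) // /marbles fvec_ofK // sum_uncross_cw.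
- by apply/forallP => i; case: (loc i).
- by apply/forallP => i; case: (loc i) => _ _ ->.
Qed.

Lemma recrossK restr a b p : arrangement a ->
  two_turns true restr a b p -> recross (uncross p) = p.
Proof.
case: p => x y a_arr two_xy; have [ccw_le cw_le] := uncross_leN a_arr two_xy.
rewrite /recross /uncross /=.
have -> : recross_cw (fvec_of (uncross_cw x y)) (fvec_of (uncross_ccw x y)) = tofun x.
  apply: functional_extensionality => i; rewrite /recross_cw /back_forth !fvec_ofK //.
  by rewrite /uncross_cw /uncross_ccw /back_forth ?ordSK ?ord_predK; lia.
have -> : recross_ccw (fvec_of (uncross_cw x y)) (fvec_of (uncross_ccw x y)) = tofun y.
  apply: functional_extensionality => i; rewrite /recross_ccw /back_forth !fvec_ofK //.
  by rewrite /uncross_cw /uncross_ccw /back_forth ?ordSK ?ord_predK; lia.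
by rewrite !tofunK.
Qed.

Lemma kmul_nturns_le restr a b : arrangement a ->
  kmul (nturns true restr) (nturns false restr) a b <=
  kmul (nturns false restr) (nturns true restr) a b.
Proof.
move=> a_arr; rewrite (kmul_nturns true) // (kmul_nturns false) //.
apply: (@leq_card_in_can _ _ _ _ uncross recross) => p two_p.
  exact: uncross_valid.
exact: recrossK two_p.
Qed.

Lemma kmul_nturns_frev restr a b :
  kmul (nturns false restr) (nturns true restr) a b =
  kmul (nturns true restr) (nturns false restr) (frev a) (frev b).
Proof.
rewrite /kmul (reindex_inj (can_inj frevK)); apply: eq_bigr => m _.
by rewrite (nturns_rev false) (nturns_rev true _ (frev m)) frevK.
Qed.

Lemma nturns_comm restr a b : arrangement a ->
  kmul (nturns true restr) (nturns false restr) a b =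
  kmul (nturns false restr) (nturns true restr) a b.
Proof.
move=> a_arr; apply/eqP; rewrite eqn_leq kmul_nturns_le //= kmul_nturns_frev.
rewrite (leq_trans (kmul_nturns_le _ _ _)) ?arrangement_frev //.
by rewrite kmul_nturns_frev !frevK.
Qed.
End Games.

Section Cylindric.
Local Open Scope ring_scope.
Lemma sum_Arr k n alpha : cylindric k n alpha -> (\sum_(i < k) Arr alpha i = n - k)%N.
Proof.
case=> alpha_mono alpha_period.
have abs_alpha_diff (j : nat) :
    (absz (alpha (j%:Z - 1) - alpha (j%:Z))%R)%:Z = alpha (j%:Z - 1) - alpha (j%:Z).
  by rewrite gez0_abs // subr_ge0 -{1}(subrK (1 : int) j%:Z); exact: alpha_mono.
have telescope (j : nat) : (\sum_(i < j) absz (alpha (i%:Z - 1) - alpha (i%:Z))%R)%N%:Z =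
    alpha (-1) - alpha (j%:Z - 1).
  elim: j => [|j IH]; first by rewrite big_ord0 subrr.
  have -> : j.+1%:Z - 1 = j%:Z by rewrite -addn1 PoszD addrK.
  by rewrite big_ord_recr PoszD IH abs_alpha_diff addrA subrK.
have : (\sum_(i < k) Arr alpha i)%N%:Z = n%:Z - k%:Z.
  by rewrite [LHS](telescope k) [alpha (-1)]alpha_period (_ : -1 + k%:Z = k%:Z - 1); lia.
lia.
Qed.
End Cylindric.

Unset Implicit Arguments.
Theorem mainTheorem9 (k n : nat) (alpha : int -> int) (t : nat) :
  (1 <= k)%N -> (k < n)%N -> cylindric k n alpha ->
  forall restr : bool,
    n_games_from (n - k) t true restr (@Arr k alpha) =
      n_games_to (n - k) t restr (@Arr k alpha) /\
    n_games_to (n - k) t restr (@Arr k alpha) =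
      n_games_from (n - k) t false restr (@Arr k alpha).
Proof.
move=> _ _ alpha_cyl restr.
have Arr_le (i : 'I_k) : Arr alpha i <= n - k.
  by rewrite -(sum_Arr alpha_cyl) leq_summand.
pose a := fvec_of (n - k) (@Arr k alpha).
have a_Arr : tofun a = Arr alpha := fvec_ofK Arr_le.
have a_arr : arrangement a by rewrite /arrangement /marbles a_Arr (sum_Arr alpha_cyl).
rewrite -a_Arr n_games_from_kpow // n_games_to_kpow // n_games_from_kpow //; split=> //.
apply: (kpow1_eq _ (@nturns_closed _ _ true restr) (@nturns_closed _ _ false restr) _ _ a_arr).
- by move=> c d c_arr; exact: nturns_comm.
- by move=> c c_arr; rewrite !kmulv_nturns1.
Qed.
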